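(* There exist a nondeterministic planning domain $D$, a finite-state policy $f$, and an LTL$_f$ formula $\psi$ such that $(D,f)\models A^{=1}(\psi)$, but there is no policy $g$ with $(D,g)\models A^{\text{sa-fair}}(\psi)$.
   Context: A nondeterministic planning domain is a tuple $D=(St,Act,s_0,Tr)$ with $St=2^{\mathcal{F}}$ a finite set of states (assignments to Boolean fluents $\mathcal{F}$), $Act=2^{\mathcal{A}}$ a finite set of actions, initial state $s_0$, and transition relation $Tr\subseteq St\times Act\times St$; every state has an applicable action ($a$ is applicable in $s$ if some $(s,a,s')\in Tr$). A trace is a finite or infinite sequence $(s_0\cup a_0)(s_1\cup a_1)\cdots$ over $2^{\mathcal{F}\cup\mathcal{A}}$ starting at $s_0$ with $(s_{i-1},a_{i-1},s_i)\in Tr$. A policy is a function $f:St^+\to Act$ with $f(u)$ applicable in the last state of $u$; a trace is an $f$-trace if $f(s_0\cdots s_i)=a_i$ for every prefix; a finite-state policy is one computed by a finite-state input/output automaton. LTL$_f$ is LTL (atoms, $\neg$, $\wedge$, next $X$, until $U$) interpreted over finite sequences over $2^{\mathcal{F}\cup\mathcal{A}}$, where $X\psi$ holds at $j$ only if $j+1$ is a position of the sequence; an infinite trace satisfies an LTL$_f$ formula if some finite prefix does. An infinite trace is state-action fair if for every $(s,a,s')\in Tr$, if $s,a$ occurs infinitely often then $s,a$ immediately followed by $s'$ occurs infinitely often. $(D,f)\models A^{\text{sa-fair}}\psi$ means every infinite state-action fair $f$-trace satisfies $\psi$. $(D,f)\models A^{=1}\psi$ means that, in any stochastic domain whose transition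 distributions $Pr(s,a)$ have support exactly $Tr(s,a)$, the infinite $f$-traces satisfying $\psi$ have probability $1$ under the Markov chain induced by $D$ and $f$ (this is independent of the choice of such probabilities). *)

From HB Require Import structures.
From mathcomp Require Import all_boot all_order all_algebra.
From mathcomp Require Import Rstruct.

Set Implicit Arguments.
Unset Strict Implicit.
Unset Printing Implicit Defensive.

Import Order.TTheory GRing.Theory Num.Theory.

Record domain := Domain {
  fluent : finType;
  atomact : finType;
  init : {set fluent};
  trans : {set fluent} -> {set atomact} -> {set fluent} -> bool;
  trans_total : forall s, exists a s', trans s a s' }.

Definition state (D : domain) := {set fluent D}.
Definition action (D : domain) := {set atomact D}.

Definition applicable (D : domain) (s : state D) (a : action D) : Prop :=
  exists s', trans s a s'.

(* A policy maps nonempty histories s_0 ... s_i (given as s_0 :: [s_1;...;s_i])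
   to actions; its value on the empty sequence is irrelevant. *)
Definition policy (D : domain) := seq (state D) -> action D.

Definition is_policy (D : domain) (f : policy D) : Prop :=
  forall (s : state D) (u : seq (state D)), applicable (last s u) (f (s :: u)).

Definition hist (T : Type) (x : nat -> T) (i : nat) : seq T :=
  [seq x k | k <- iota 0 i.+1].

(* infinite trace (s_0 u a_0)(s_1 u a_1)... given by st and ac *)
Definition is_trace (D : domain) (st : nat -> state D) (ac : nat -> action D) : Prop :=
  st 0 = init D /\ forall i, trans (st i) (ac i) (st i.+1).

Definition is_f_trace (D : domain) (f : policy D)
    (st : nat -> state D) (ac : nat -> action D) : Prop :=
  is_trace st ac /\ forall i, ac i = f (hist st i).

Fixpoint fsm_out (Q I O : Type) (delta : Q -> I -> Q) (out : Q -> I -> O)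
    (q : Q) (s : I) (u : seq I) : O :=
  match u with
  | [::] => out q s
  | s' :: u' => fsm_out delta out (delta q s) s' u'
  end.

Definition finite_state (D : domain) (f : policy D) : Prop :=
  exists (Q : finType) (q0 : Q) (delta : Q -> state D -> Q)
         (out : Q -> state D -> action D),
    forall (s : state D) (u : seq (state D)), f (s :: u) = fsm_out delta out q0 s u.

Inductive ltlf (AP : Type) :=
  | LAtom of AP
  | LNot of ltlf AP
  | LAnd of ltlf AP & ltlf AP
  | LNext of ltlf AP
  | LUntil of ltlf AP & ltlf AP.

(* holds L n phi j : the finite sequence of length n with labelling L
   (positions 0..n-1) satisfies phi at position j *)
Fixpoint holds (AP : Type) (L : nat -> AP -> bool) (n : nat) (phi : ltlf AP)
    (j : nat) : bool :=
  match phi with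
  | LAtom p => L j p
  | LNot p => ~~ holds L n p j
  | LAnd p q => holds L n p j && holds L n q j
  | LNext p => (j.+1 < n) && holds L n p j.+1
  | LUntil p q =>
      [exists k : 'I_n, (j <= k) && holds L n q k &&
         [forall i : 'I_n, ((j <= i) && (i < k)) ==> holds L n p i]]
  end.

Definition sat_fin (AP : Type) (L : nat -> AP -> bool) (n : nat) (phi : ltlf AP) : bool :=
  (0 < n) && holds L n phi 0.

Definition atom (D : domain) := (fluent D + atomact D)%type.

Definition lab (D : domain) (st : nat -> state D) (ac : nat -> action D)
    (j : nat) (p : atom D) : bool :=
  match p with
  | inl x => x \in st j
  | inr y => y \in ac j
  end.

Definition inf_sat (D : domain) (st : nat -> state D) (ac : nat -> action D)
    (psi : ltlf (atom D)) : Prop :=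
  exists n, sat_fin (lab st ac) n psi.

Definition sa_fair (D : domain) (st : nat -> state D) (ac : nat -> action D) : Prop :=
  forall s a s', trans s a s' ->
    (forall N, exists i, N <= i /\ st i = s /\ ac i = a) ->
    (forall N, exists i, N <= i /\ st i = s /\ ac i = a /\ st i.+1 = s').

Definition A_safair (D : domain) (g : policy D) (psi : ltlf (atom D)) : Prop :=
  forall st ac, is_f_trace g st ac -> sa_fair st ac -> inf_sat st ac psi.

Local Open Scope ring_scope.

Definition stoch (D : domain) (P : state D -> action D -> state D -> Rdefinitions.R) : Prop :=
  forall s a, applicable s a ->
    (forall s', 0 <= P s a s') /\
    (forall s', (0 < P s a s') <-> trans s a s') /\
    \sum_(s' : state D) P s a s' = 1.

Definition path_of (D : domain) (n : nat) (x : {ffun 'I_n.+1 -> state D}) : nat -> state D :=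
  fun k => x (inord k).

(* probability, in the Markov chain induced by D, P and f, of the event
   "some prefix of length <= n+1 of the f-trace satisfies psi"; this event
   only depends on s_0..s_n, so it is a finite union of cylinders. *)
Definition prob_by (D : domain) (f : policy D)
    (P : state D -> action D -> state D -> Rdefinitions.R)
    (psi : ltlf (atom D)) (n : nat) : Rdefinitions.R :=
  \sum_(x : {ffun 'I_n.+1 -> state D} |
          (x ord0 == init D) &&
          [exists m : 'I_n.+2,
             sat_fin (lab (path_of x) (fun j => f (hist (path_of x) j))) m psi])
    \prod_(i < n) P (path_of x i) (f (hist (path_of x) i)) (path_of x i.+1).

(* (D,f) |= A^{=1} psi : for every stochastic version of D, the probability that
   the f-trace satisfies psi (the increasing limit of prob_by n) equals 1. *)
Definition A_eq1 (D : domain) (f : policy D) (psi : ltlf (atom D)) : Prop :=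
  forall P, stoch P ->
    forall eps : Rdefinitions.R, 0 < eps -> exists n, 1 - eps <= prob_by f P psi n.

(* In the one-fluent domain below every transition is possible and the only
   action is the empty one, so all policies coincide.  The formula [psi] fails
   exactly on the 4-periodic trace  ~h ~h h h ~h ~h h h ...,  which takes every
   transition infinitely often and is therefore state-action fair.  In any
   stochastic version every transition has probability at most some c < 1, so
   the unique violating history of length n has probability at most c^n. *)

From mathcomp Require Import all_boot all_order all_algebra.
From mathcomp Require Import Rstruct.

Set Implicit Arguments.
Unset Strict Implicit.
Unset Printing Implicit Defensive.
Import Order.TTheory GRing.Theory Num.Theory.

Section DerivedConnectives.
Variable AP : Type.

Definition LOr (p q : ltlf AP) : ltlf AP := LNot (LAnd (LNot p) (LNot q)).

(* The syntax has no constant true; [q \/ ~ q] plays its role. *)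
Definition LEventually (q : ltlf AP) : ltlf AP := LUntil (LOr q (LNot q)) q.

Lemma holds_or L n p q j :
  holds L n (LOr p q) j = holds L n p j || holds L n q j.
Proof. by rewrite /= negb_and !negbK. Qed.

Lemma holds_eventually L n q j :
  holds L n (LEventually q) j = [exists k : 'I_n, (j <= k) && holds L n q k].
Proof.
apply/existsP/existsP => -[k]; first by case/andP=> jqk _; exists k.
move=> jqk; exists k; rewrite jqk /=.
by apply/forallP => i; apply/implyP => _; rewrite /= negb_and !negbK orbN.
Qed.

End DerivedConnectives.

Lemma periodic_add_mul (T : Type) (x : nat -> T) p :
  (forall i, x (i + p) = x i) -> forall m i, x (i + m * p) = x i.
Proof. by move=> xp; elim=> [|m IH] i; rewrite ?addn0 // mulSnr addnA xp. Qed.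

Lemma periodic_sa_fair (D : domain) (st : nat -> state D) (ac : nat -> action D) p :
  0 < p -> (forall i, st (i + p) = st i) -> (forall i, ac (i + p) = ac i) ->
  (forall s a s', trans s a s' -> exists k, [/\ st k = s, ac k = a & st k.+1 = s']) ->
  sa_fair st ac.
Proof.
move=> p_gt0 st_p ac_p occurs s a s' tr _ N.
have [k [<- <- <-]] := occurs s a s' tr.
exists (k + N * p); split; first by rewrite (leq_trans (leq_pmulr N p_gt0)) ?leq_addl.
by rewrite -addSn !periodic_add_mul.
Qed.

Definition bit_domain : domain :=
  @Domain unit void set0 (fun _ _ _ => true) (fun _ => ex_intro _ set0 (ex_intro _ set0 isT)).

Definition noop : policy bit_domain := fun _ => set0.

Lemma bit_state_eq (s s' : state bit_domain) : (tt \in s) = (tt \in s') -> s = s'.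
Proof. by move=> ss'; apply/setP => -[]. Qed.

Lemma bit_action_eq (a b : action bit_domain) : a = b.
Proof. by apply/setP => -[]. Qed.

Definition bit : ltlf (atom bit_domain) := LAtom (inl tt).

Definition psi : ltlf (atom bit_domain) :=
  LOr (LNext bit)
      (LEventually (LOr (LAnd bit (LNext (LNext bit)))
                        (LAnd (LNot bit) (LNext (LNext (LNot bit)))))).

Lemma holds_psi (L : nat -> atom bit_domain -> bool) n :
  holds L n psi 0 =
  (1 < n) && L 1 (inl tt) ||
  [exists k : 'I_n, (k.+2 < n) && (L k (inl tt) == L k.+2 (inl tt))].
Proof.
rewrite holds_or holds_eventually; congr (_ || _).
apply: eq_existsb => k; rewrite holds_or /=.
have [lt_k2n|_] := ltnP k.+2 n; rewrite ?(ltnW lt_k2n) /= ?andbF ?andFb //=.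
by case: (L k _); case: (L k.+2 _).
Qed.

Definition pattern (i : nat) : bool := odd i./2.

Lemma pattern_add4 i : pattern (i + 4) = pattern i.
Proof. by rewrite addn4 /pattern /= negbK. Qed.

Lemma pattern_unique (b : nat -> bool) n :
  b 0 = false -> ((1 < n) -> b 1 = false) ->
  (forall k, (k.+2 < n) -> b k.+2 = ~~ b k) ->
  forall i, (i < n) -> b i = pattern i.
Proof.
move=> b0 b1 bSS.
suff pair i : ((i < n) -> b i = pattern i) /\ ((i.+1 < n) -> b i.+1 = pattern i.+1).
  by move=> i; case: (pair i).
elim: i => [|i [IH1 IH2]]; first by split=> // /b1.
by split=> // lt_i2n; rewrite bSS // IH1 // (ltn_trans _ lt_i2n).
Qed.

Definition bad_trace (i : nat) : state bit_domain := [set _ | pattern i].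

Lemma bad_trace_bit i : (tt \in bad_trace i) = pattern i.
Proof. by rewrite inE. Qed.

Lemma bad_trace_sa_fair (ac : nat -> action bit_domain) : sa_fair bad_trace ac.
Proof.
apply: (@periodic_sa_fair _ _ _ 4) => // [i|i|s a s' _].
- by apply: bit_state_eq; rewrite !bad_trace_bit pattern_add4.
- exact: bit_action_eq.
have [k [pk pk1]] : exists k, pattern k = (tt \in s) /\ pattern k.+1 = (tt \in s').
  by case: (tt \in s); case: (tt \in s'); [exists 2 | exists 3 | exists 1 | exists 0].
exists k; split; [| exact: bit_action_eq |]; apply: bit_state_eq; by rewrite bad_trace_bit.
Qed.

Lemma bad_trace_violates (ac : nat -> action bit_domain) : ~ inf_sat bad_trace ac psi.
Proof.
case=> n /andP [_]; rewrite holds_psi /= bad_trace_bit andbF /=.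
by case/existsP => k; rewrite !bad_trace_bit /pattern /=; case: (odd _); rewrite andbF.
Qed.

Lemma no_sa_fair_policy : ~ (exists g : policy bit_domain, is_policy g /\ A_safair g psi).
Proof.
case=> g [_ g_fair]; apply: (@bad_trace_violates (fun i => g (hist bad_trace i))).
apply: (g_fair bad_trace); last exact: bad_trace_sa_fair.
by split.
Qed.

Lemma inord_succ n k : k <= n ->
  (inord k.+1 : 'I_n.+2) = lift ord0 (inord k : 'I_n.+1).
Proof. by move=> le_kn; apply: val_inj; rewrite /= /bump /= add1n !inordK. Qed.

Definition ffun_cons (T : Type) n (s : T) (y : {ffun 'I_n.+1 -> T}) : {ffun 'I_n.+2 -> T} :=
  [ffun i => if unlift ord0 i is Some j then y j else s].

Definition ffun_tail (T : Type) n (x : {ffun 'I_n.+2 -> T}) : {ffun 'I_n.+1 -> T} :=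
  [ffun j => x (lift ord0 j)].

Lemma ffun_consK (T : Type) n (x : {ffun 'I_n.+2 -> T}) : ffun_cons (x ord0) (ffun_tail x) = x.
Proof. by apply/ffunP => i; rewrite !ffunE; case: unliftP => [j ->|->]; rewrite ?ffunE. Qed.

Lemma ffun_tailK (T : Type) n s (y : {ffun 'I_n.+1 -> T}) : ffun_tail (ffun_cons s y) = y.
Proof. by apply/ffunP => j; rewrite !ffunE liftK. Qed.

Local Open Scope ring_scope.

Section PathProbability.
Variables (R : realDomainType) (S : finType) (Q : S -> S -> R).
Hypothesis Q_ge0 : forall s s', 0 <= Q s s'.

Definition path_prob n (x : {ffun 'I_n.+1 -> S}) : R :=
  \prod_(i < n) Q (x (inord i)) (x (inord i.+1)).

Lemma path_prob_le c n (x : {ffun 'I_n.+1 -> S}) :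
  (forall s s', Q s s' <= c) -> path_prob x <= c ^+ n.
Proof.
move=> Q_le; rewrite -[n in c ^+ n]card_ord -prodr_const.
by apply: ler_prod => i _; rewrite Q_ge0 Q_le.
Qed.

Lemma path_prob_cons n s (y : {ffun 'I_n.+1 -> S}) :
  path_prob (ffun_cons s y) = Q s (y ord0) * path_prob y.
Proof.
rewrite /path_prob big_ord_recl; congr (_ * _).
  have -> : (inord 0 : 'I_n.+2) = ord0 by apply: val_inj; rewrite /= inordK.
  by rewrite (inord_succ (leq0n n)) !ffunE unlift_none liftK -[ord0]inord_val.
apply: eq_bigr => i _.
by rewrite !(inord_succ (ltnW (ltn_ord i))) (inord_succ (ltn_ord i)) !ffunE !liftK.
Qed.

Hypothesis Q_sum1 : forall s, \sum_s' Q s s' = 1.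

Lemma sum_path_prob n s : \sum_(x : {ffun 'I_n.+1 -> S} | x ord0 == s) path_prob x = 1.
Proof.
elim: n s => [|n IH] s.
  rewrite (big_pred1 [ffun => s]) => [|x]; first by rewrite /path_prob big_ord0.
  apply/eqP/eqP => [<-|->]; last by rewrite ffunE.
  by apply/ffunP => i; rewrite ffunE ord1.
rewrite (reindex_onto (ffun_cons s) (@ffun_tail S n)) => [|x /eqP <-]; last exact: ffun_consK.
rewrite (eq_bigl xpredT); last by move=> y; rewrite ffun_tailK ffunE unlift_none !eqxx.
rewrite (partition_big (fun y : {ffun _ -> S} => y ord0) xpredT) //= -(Q_sum1 s).
apply: eq_bigr => s' _; rewrite -[Q s s']mulr1 -(IH s') mulr_sumr.
by apply: eq_bigr => y /eqP y0; rewrite path_prob_cons y0.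
Qed.

Lemma sum_path_prob_ge n s c (good : pred {ffun 'I_n.+1 -> S}) w :
  (forall s s', Q s s' <= c) ->
  (forall x : {ffun 'I_n.+1 -> S}, x ord0 == s -> ~~ good x -> x = w) ->
  1 - c ^+ n <= \sum_(x : {ffun _ -> S} | (x ord0 == s) && good x) path_prob x.
Proof.
move=> Q_le bad_w; rewrite -(sum_path_prob n s) (bigID good) /= lerBlDr lerD2l.
apply: le_trans (path_prob_le w Q_le).
rewrite big_mkcond (bigD1 w) //= big1 ?addr0 => [|x /negPf x_w]; last first.
  by case: ifP => // /andP [x0 /(bad_w _ x0) x_eq]; rewrite x_eq eqxx in x_w.
by case: ifP => // _; rewrite /path_prob prodr_ge0.
Qed.

Lemma stochastic_lt1 s s1 s2 : s1 != s2 -> 0 < Q s s2 -> Q s s1 < 1.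
Proof.
move=> s12 Q2_gt0; rewrite -(Q_sum1 s) (bigD1 s1) //= (bigD1 s2) 1?eq_sym //=.
by rewrite ltrDl ltr_pwDl // sumr_ge0.
Qed.

End PathProbability.

Lemma finite_lt1_ub (R : realDomainType) (I : finType) (F : I -> R) :
  (forall i, F i < 1) -> exists2 c, c < 1 & forall i, F i <= c.
Proof.
move=> F_lt1; have [i0 _ | I0] := pickP (@predT I); last first.
  by exists 0 => [|i]; [exact: ltr01 | have := I0 i].
exists (F (Order.arg_max i0 xpredT F)) => //.
by case: arg_maxP => // i _ i_max j; apply: i_max.
Qed.

Lemma expr_lt1_small (c eps : Rdefinitions.R) :
  0 <= c -> c < 1 -> 0 < eps -> exists n, c ^+ n <= eps.
Proof.
move=> c_ge0 c_lt1 eps_gt0.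
have c_abs_lt1 : Rdefinitions.Rlt (Rbasic_fun.Rabs c) 1.
  by rewrite Rbasic_fun.Rabs_pos_eq; [exact/RltP | exact/RleP].
have [n c_small] := Rfunctions.pow_lt_1_zero c c_abs_lt1 eps (elimT RltP eps_gt0).
exists n; have := c_small n (le_n n).
rewrite Rbasic_fun.Rabs_pos_eq RpowE => [/RltP/ltW //|].
by apply/RleP; rewrite exprn_ge0.
Qed.

Definition bad_prefix n : {ffun 'I_n.+1 -> state bit_domain} := [ffun i : 'I_n.+1 => bad_trace i].

Lemma bad_prefix_unique n (x : {ffun 'I_n.+1 -> state bit_domain}) :
  x ord0 = init bit_domain ->
  ~~ sat_fin (lab (path_of x) (fun j => noop (hist (path_of x) j))) n.+1 psi ->
  x = bad_prefix n.
Proof.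
rewrite /sat_fin holds_psi /= negb_or => x0 /andP [b1 /existsPn bSS].
apply/ffunP => i; rewrite ffunE; apply: bit_state_eq.
rewrite bad_trace_bit -[i in x i]inord_val.
apply: (@pattern_unique (fun j => tt \in path_of x j) n.+1) => // [|lt_1n|k lt_k2n].
- by rewrite /path_of (_ : inord 0 = ord0) ?x0 ?inE //; apply: val_inj; rewrite /= inordK.
- by apply: negbTE; rewrite lt_1n in b1.
move: (bSS (Ordinal (ltn_trans (ltnSn _) (ltnW lt_k2n)))); rewrite /= lt_k2n /=.
by case: (tt \in _); case: (tt \in _).
Qed.

Lemma noop_A_eq1 : A_eq1 noop psi.
Proof.
move=> P P_stoch eps eps_gt0; pose Q s s' := P s set0 s'.
have Q_row s : [/\ forall s', 0 <= Q s s', forall s', 0 < Q s s' & \sum_s' Q s s' = 1].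
  have [Q_ge0 [Q_gt0 Q_sum1]] := P_stoch s set0 (ex_intro _ set0 isT).
  by split=> // s'; apply/Q_gt0.
have Q_ge0 s s' : 0 <= Q s s' by case: (Q_row s).
have Q_sum1 s : \sum_s' Q s s' = 1 by case: (Q_row s).
have [c c_lt1 Q_le] : exists2 c, c < 1 & forall p : state bit_domain * state bit_domain, Q p.1 p.2 <= c.
  apply: finite_lt1_ub => -[s s']; apply: (@stochastic_lt1 _ _ _ Q_ge0 Q_sum1 _ _ (~: s')).
    by apply/eqP => /setP /(_ tt); rewrite inE; case: (tt \in s').
  by case: (Q_row s).
have [n c_small] := expr_lt1_small (le_trans (Q_ge0 set0 set0) (Q_le (set0, set0))) c_lt1 eps_gt0.
exists n; apply: (@le_trans _ _ (1 - c ^+ n)); first by rewrite lerD2l lerN2.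
apply: (sum_path_prob_ge Q_ge0 Q_sum1 (w := bad_prefix n)) => [s s'|x x0 x_bad].
  exact: (Q_le (s, s')).
apply: bad_prefix_unique; first exact/eqP.
by move/existsPn/(_ ord_max): x_bad.
Qed.

Lemma noop_policy : is_policy noop.
Proof. by move=> s u; exists set0. Qed.

Lemma noop_finite_state : finite_state noop.
Proof.
exists unit, tt, (fun _ _ => tt), (fun _ _ => set0) => s u.
by elim: u s => [|s' u IH] s //=; exact: IH.
Qed.

Theorem proposition3 :
  exists (D : domain) (f : policy D),
    is_policy f /\ finite_state f /\
    exists psi : ltlf (atom D),
      A_eq1 f psi /\ ~ (exists g : policy D, is_policy g /\ A_safair g psi).
Proof.
exists bit_domain, noop; split; first exact: noop_policy.
split; first exact: noop_finite_state.
by exists psi; split; [exact: noop_A_eq1 | exact: no_sa_fair_policy].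
Qed.
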